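(* For each $n\ge 2$, the number of non-periodic diameter-$4$ perfect Lee codes in $Z^n$ is $2^{\aleph_0}$.
   Context: Lee distance on $Z^n$: $\rho_L(v,w)=\sum_i|v_i-w_i|$; $S_{n,1}(v)=\{w:\rho_L(v,w)\le1\}$; for $\rho_L(v,w)=1$ the double-sphere is $DS_{n,1}(v,w)=S_{n,1}(v)\cup S_{n,1}(w)$. A copy of a set is its image under a linear distance-preserving bijection of $Z^n$; a tiling is a family of pairwise disjoint copies covering $Z^n$. A diameter-$4$ perfect Lee code in $Z^n$ is a set $\mathcal{L}$ with pairwise Lee distances $\ge 4$ such that there is a tiling of $Z^n$ by copies of $DS_{n,1}$ in which each tile contains exactly one element of $\mathcal{L}$ and distinct tiles contain distinct elements. A set $\mathcal{S}\subset Z^n$ is periodic if there is $p>0$ with $s\in\mathcal{S}\iff s+pe_i\in\mathcal{S}$ for all $i=1,\dots,n$; otherwise it is non-periodic. *)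

From mathcomp Require Import all_boot all_order all_algebra.
From mathcomp Require Import boolp classical_sets cardinality.
Set Implicit Arguments. Unset Strict Implicit. Unset Printing Implicit Defensive.
Import Order.TTheory GRing.Theory Num.Theory.
Local Open Scope ring_scope.
Local Open Scope classical_set_scope.

Definition Zn (n : nat) := 'rV[int]_n.

Definition lee n (v w : Zn n) : int := \sum_(i < n) `|v 0 i - w 0 i|.

Definition S1 n (v : Zn n) : set (Zn n) := [set w | lee v w <= 1].

(* double-sphere, for lee v w = 1 *)
Definition DS1 n (v w : Zn n) : set (Zn n) := S1 v `|` S1 w.

Definition lin_isometry n (f : Zn n -> Zn n) : Prop :=
  (forall x y, f (x + y) = f x + f y) /\
  (forall x y, lee (f x) (f y) = lee x y) /\ bijective f.

Definition DS_copy n (T : set (Zn n)) : Prop :=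
  exists v w f, lee v w = 1 /\ lin_isometry f /\ T = f @` DS1 v w.

Definition DS_tiling n (F : set (set (Zn n))) : Prop :=
  (forall T, F T -> DS_copy T) /\
  (forall T T', F T -> F T' -> T <> T' -> T `&` T' = set0) /\
  (forall x, exists2 T, F T & T x).

Definition perfect_lee_code_d4 n (L : set (Zn n)) : Prop :=
  (forall x y, L x -> L y -> x <> y -> 4 <= lee x y) /\
  exists F : set (set (Zn n)), DS_tiling F /\
    (forall T, F T -> exists! c, L c /\ T c) /\
    (forall T T' c c', F T -> F T' -> T <> T' -> L c -> T c -> L c' -> T' c' -> c <> c').

Definition periodic n (S : set (Zn n)) : Prop :=
  exists p : nat, (0 < p)%N /\
    forall (s : Zn n) (i : 'I_n), S s <-> S (s + (p%:Z) *: delta_mx 0 i).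

From mathcomp Require Import all_boot all_order all_algebra.
From mathcomp Require Import boolp classical_sets cardinality.
From mathcomp Require Import zify ring.
Set Implicit Arguments. Unset Strict Implicit. Unset Printing Implicit Defensive.
Import Order.TTheory GRing.Theory Num.Theory.
Local Open Scope ring_scope.
Local Open Scope classical_set_scope.

(* Writing [csum v] for the coordinate sum and [wsum v] for the weighted sum
   [\sum_i i * v_i] of [v] in Z^(n+1), every [tau : int -> bool] yields the code
   of the [c] with [csum c = 4k] and [wsum c = tau k (mod n+1)].  Two codewords
   at Lee distance at most 3 lie in the same layer [k] and differ by a vector of
   norm at most 3 and coordinate sum 0, i.e. by some [e_i - e_j], whose weight
   [i - j] is not divisible by [n+1]; so the double spheres [DS(c, c + e_0)]
   are disjoint, and a short case analysis on [csum x mod 4] shows that they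
   cover Z^(n+1).  Taking [tau] false on negative layers, true on layer 0 and
   arbitrary on positive layers gives [2^aleph_0] distinct codes, none of them
   periodic in the direction [e_0]; conversely there are at most [2^aleph_0]
   subsets of the countable set Z^n. *)

Definition e n (k : 'I_n) : Zn n := delta_mx 0 k.

Lemma e_coord n (k i : 'I_n) : e k 0 i = (i == k)%:R.
Proof. by rewrite /e mxE eqxx. Qed.

Lemma sum_delta n (f : 'I_n -> int) (k : 'I_n) :
  \sum_i f i * (i == k)%:R = f k.
Proof.
rewrite (bigD1 k) //= eqxx mulr1 big1 ?addr0 // => i /negbTE ->.
exact: mulr0.
Qed.

Section LeeNorm.
Variable n : nat.
Implicit Types (a b v w x : Zn n).

Definition norm1 v : int := \sum_i `|v 0 i|.

Lemma lee_norm1 v w : lee v w = norm1 (v - w).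
Proof. by apply: eq_bigr => i _; rewrite !mxE. Qed.

Lemma norm1N v : norm1 (- v) = norm1 v.
Proof. by apply: eq_bigr => i _; rewrite mxE normrN. Qed.

Lemma norm1D v w : norm1 (v + w) <= norm1 v + norm1 w.
Proof.
rewrite /norm1 -big_split /=; apply: ler_sum => i _; rewrite mxE.
exact: ler_normD.
Qed.

Lemma norm1_e k : norm1 (e k) = 1.
Proof.
by rewrite /norm1 (eq_bigr (fun i => 1 * (i == k)%:R)) ?sum_delta // => i _;
  rewrite e_coord mul1r; case: (i == k).
Qed.

Lemma leeC v w : lee v w = lee w v.
Proof. by rewrite !lee_norm1 -norm1N opprB. Qed.

Lemma lee_triangle a b x : lee a b <= lee a x + lee x b.
Proof. by rewrite !lee_norm1; apply: le_trans (norm1D _ _); rewrite addrA subrK. Qed.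

Lemma leeD2r a b x : lee (a + x) (b + x) = lee a b.
Proof. by rewrite !lee_norm1 opprD addrACA subrr addr0. Qed.

Lemma leexx a : lee a a = 0.
Proof. by rewrite lee_norm1 subrr /norm1 big1 // => i _; rewrite mxE. Qed.

Lemma lee_addr_e a k : lee a (a + e k) = 1.
Proof. by rewrite lee_norm1 opprD addNKr norm1N norm1_e. Qed.

Lemma lee_subr_e a k : lee a (a - e k) = 1.
Proof. by rewrite lee_norm1 opprB addrC subrK norm1_e. Qed.

End LeeNorm.

Section LinearForm.
Variables (n : nat) (w : 'I_n -> int).
Implicit Types (u v : Zn n).

Definition lform v : int := \sum_i w i * v 0 i.

Lemma lformD u v : lform (u + v) = lform u + lform v.
Proof. by rewrite /lform -big_split; apply: eq_bigr => i _; rewrite mxE mulrDr. Qed.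

Lemma lform0 : lform 0 = 0.
Proof. by rewrite /lform big1 // => i _; rewrite mxE mulr0. Qed.

Lemma lformB u v : lform (u - v) = lform u - lform v.
Proof. by rewrite /lform -sumrB; apply: eq_bigr => i _; rewrite !mxE mulrBr. Qed.

Lemma lformZ a v : lform (a *: v) = a * lform v.
Proof. by rewrite /lform mulr_sumr; apply: eq_bigr => i _; rewrite mxE mulrCA. Qed.

Lemma lform_e k : lform (e k) = w k.
Proof. by rewrite -(sum_delta w k); apply: eq_bigr => i _; rewrite e_coord. Qed.

End LinearForm.

Notation csum := (lform (fun _ => 1)).
Notation wsum := (lform (fun i => (nat_of_ord i)%:Z)).

Lemma norm_csum n (v : Zn n) : `|csum v| <= norm1 v.
Proof.
apply: le_trans (ler_norm_sum _ _ _) _.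
by apply: ler_sum => i _; rewrite mul1r.
Qed.

Lemma psumr_eq1 n (f : 'I_n -> int) : (forall i, 0 <= f i) ->
  \sum_i f i = 1 -> exists k, forall i, f i = (i == k)%:R.
Proof.
move=> f_ge0 sum1.
have [k fk_neq0] : exists k, f k != 0.
  apply/existsP; rewrite -negb_forall; apply/negP => /forallP f0.
  by move: sum1; rewrite big1 // => i _; apply/eqP.
move: sum1; rewrite (bigD1 k) //=; set rest := (X in _ + X) => sum1.
have rest_ge0 : 0 <= rest by apply: sumr_ge0.
have := f_ge0 k; move/eqP: fk_neq0 => fk_neq0 fk_ge0.
have /(psumr_eq0P (fun i _ => f_ge0 i)) rest0 : rest = 0 by lia.
exists k => i; have [->|/rest0 -> //] := eqVneq i k; lia.
Qed.

(* The positive and negative parts of [d] have equal norms adding up to at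
   most 3, so both are 0 or both are a single unit vector. *)
Lemma csum0_norm1_le3 n (d : Zn n) : csum d = 0 -> norm1 d <= 3 ->
  d = 0 \/ exists i j, i != j /\ d = e i - e j.
Proof.
move=> sum0 norm_le3.
pose pos i := if 0 <= d 0 i then d 0 i else 0.
pose neg i := if 0 <= d 0 i then 0 else - d 0 i.
have pos_ge0 i : 0 <= pos i by rewrite /pos; case: ifP.
have neg_ge0 i : 0 <= neg i.
  by rewrite /neg; case: ifPn => // h; rewrite oppr_ge0 ltW // ltNge.
have dE i : d 0 i = pos i - neg i by rewrite /pos /neg; case: ifP; rewrite ?subr0 ?sub0r ?opprK.
have pos_neg i : pos i = 0 \/ neg i = 0 by rewrite /pos /neg; case: ifP; [right|left].
have norm1E : norm1 d = \sum_i pos i + \sum_i neg i.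
  rewrite /norm1 -big_split; apply: eq_bigr => i _ /=; rewrite /pos /neg.
  by case: ifPn => h; [rewrite addr0 ger0_norm | rewrite add0r ltr0_norm // ltNge].
have csumE : csum d = \sum_i pos i - \sum_i neg i.
  by rewrite -sumrB; apply: eq_bigr => i _; rewrite mul1r.
have P0 : 0 <= \sum_i pos i by apply: sumr_ge0.
have N0 : 0 <= \sum_i neg i by apply: sumr_ge0.
have [[pos0 neg0]|[pos1 neg1]] : (\sum_i pos i = 0 /\ \sum_i neg i = 0) \/
                                   (\sum_i pos i = 1 /\ \sum_i neg i = 1) by lia.
  left; apply/matrixP => r k; rewrite ord1 mxE dE.
  by rewrite (psumr_eq0P (fun i _ => pos_ge0 i) pos0) // (psumr_eq0P (fun i _ => neg_ge0 i) neg0).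
right; have [i posE] := psumr_eq1 pos_ge0 pos1; have [j negE] := psumr_eq1 neg_ge0 neg1.
exists i, j; split.
  by apply/eqP => ij; subst j; have := pos_neg i; rewrite posE negE eqxx; lia.
by apply/matrixP => r k; rewrite ord1 !mxE dE posE negE.
Qed.

Lemma norm1_le3_eq0 n (d : Zn n) (q : int) :
  norm1 d <= 3 -> csum d = 0 -> wsum d = q * n%:Z -> d = 0.
Proof.
move=> norm_le3 sum0; have [//|[i [j [ij ->]]]] := csum0_norm1_le3 sum0 norm_le3.
rewrite lformB !lform_e => wE; exfalso.
have := ltn_ord i; have := ltn_ord j; move: ij wE; rewrite -(inj_eq val_inj) /=.
move: (val i) (val j) => {}i {}j /eqP ij wE j_lt i_lt.
have [q0|[q_ge1|q_le_1]] : q = 0 \/ 1 <= q \/ q <= -1 by lia.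
- by move: wE; rewrite q0 mul0r; lia.
- by have := ler_wpM2r (ler0n _ n) q_ge1; rewrite mul1r; lia.
- by have := ler_wpM2r (ler0n _ n) q_le_1; rewrite mulN1r; lia.
Qed.

Lemma int_ord_rem n (z : int) :
  exists (i : 'I_n.+1) (q : int), z = (i : nat)%:Z + q * n.+1%:Z.
Proof.
have n1_neq0 : n.+1%:Z != 0 :> int by [].
have rem_ge0 := modz_ge0 z n1_neq0.
have rem_lt : (absz (z %% n.+1%:Z)%Z < n.+1)%N.
  by rewrite -ltz_nat abszE ger0_norm // ltz_mod.
exists (Ordinal rem_lt), (z %/ n.+1%:Z)%Z => /=.
by rewrite abszE ger0_norm // addrC -divz_eq.
Qed.

Definition tile n (c : Zn n.+1) : set (Zn n.+1) := DS1 c (c + e ord0).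

Lemma tile_meet_lee_le3 n (c c' x : Zn n.+1) : tile c x -> tile c' x -> lee c c' <= 3.
Proof.
rewrite /tile /DS1 /S1 /= => hc hc'.
have e_c := lee_addr_e c ord0; have e_c' := lee_addr_e c' ord0.
case: hc => hc; case: hc' => hc'.
- by have := lee_triangle c c' x; rewrite (leeC x c'); lia.
- have := lee_triangle c c' x; have := lee_triangle x c' (c' + e ord0).
  by rewrite (leeC x (c' + e ord0)) (leeC (c' + e ord0) c'); lia.
- have := lee_triangle c c' (c + e ord0); have := lee_triangle (c + e ord0) c' x.
  by rewrite (leeC x c'); lia.
- rewrite -(leeD2r c c' (e ord0)).
  by have := lee_triangle (c + e ord0) (c' + e ord0) x; rewrite (leeC x (c' + e ord0)); lia.
Qed.

Section Code.
Variables (n : nat) (tau : int -> bool).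
Implicit Types (c x : Zn n.+1).

Definition code : set (Zn n.+1) :=
  [set c | exists k q : int, csum c = 4 * k /\ wsum c = (tau k)%:Z + q * n.+1%:Z].

Lemma code_lee_le3 c c' : code c -> code c' -> lee c c' <= 3 -> c = c'.
Proof.
move=> [k [q [sum_c w_c]]] [k' [q' [sum_c' w_c']]] lee_le3.
have := norm_csum (c - c'); rewrite -lee_norm1 => /le_trans/(_ lee_le3).
rewrite lformB sum_c sum_c' ler_norml => /andP[lo hi].
have kE : k' = k by lia.
subst k'; apply/eqP; rewrite -subr_eq0; apply/eqP.
apply: (@norm1_le3_eq0 _ _ (q - q')).
- by rewrite -lee_norm1.
- by rewrite lformB sum_c sum_c' subrr.
- by rewrite lformB w_c w_c'; ring.
Qed.

Lemma code_tile_inj c c' x : code c -> code c' -> tile c x -> tile c' x -> c = c'.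
Proof. by move=> Cc Cc' hc hc'; apply: code_lee_le3 (tile_meet_lee_le3 hc hc'). Qed.

(* The layer is fixed by [s]; choosing [i] in [c = x - t - s e_i] adjusts the
   weight modulo [n+1]. *)
Lemma code_near x (t : Zn n.+1) (s k : int) : wsum t = 0 -> (s = 1 \/ s = -1) ->
  csum x = csum t + s + 4 * k -> exists2 c, code c & lee (c + t) x = 1.
Proof.
move=> w_t [->|->] sum_x.
- have [i [q zE]] := int_ord_rem n (wsum x - (tau k)%:Z).
  exists (x - t - e i); last by rewrite addrAC subrK leeC lee_subr_e.
  by exists k, q; rewrite !lformB !lform_e w_t; split; lia.
- have [i [q zE]] := int_ord_rem n ((tau k)%:Z - wsum x).
  exists (x + e i - t); last by rewrite subrK leeC lee_addr_e.
  by exists k, (- q); rewrite !lformB !lformD !lform_e w_t; split; lia.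
Qed.

Lemma code_cover x : exists2 c, code c & tile c x.
Proof.
pose k := ((csum x + 1) %/ 4)%Z.
have divE : csum x + 1 = k * 4 + ((csum x + 1) %% 4)%Z by rewrite /k -divz_eq.
have rem_ge0 : 0 <= ((csum x + 1) %% 4)%Z by apply: modz_ge0.
have rem_lt4 : ((csum x + 1) %% 4)%Z < 4 by apply: ltz_mod.
have w_e0 : wsum (e ord0 : Zn n.+1) = 0 by rewrite lform_e.
have sum_e0 : csum (e ord0 : Zn n.+1) = 1 by rewrite lform_e.
have [r_odd|r_even] : (csum x - 4 * k = 1 \/ csum x - 4 * k = -1) \/
                      (csum x - 4 * k = 0 \/ csum x - 4 * k = 2) by lia.
- have [c Cc lee_cx] : exists2 c, code c & lee (c + 0) x = 1.
    by apply: (@code_near _ _ (csum x - 4 * k) k); rewrite ?lform0; lia.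
  by exists c => //; left; rewrite /S1 /= -(addr0 c) lee_cx.
- have [c Cc lee_cx] : exists2 c, code c & lee (c + e ord0) x = 1.
    by apply: (@code_near _ _ (csum x - 4 * k - 1) k); rewrite ?w_e0 ?sum_e0; lia.
  by exists c => //; right; rewrite /S1 /= lee_cx.
Qed.

Lemma code_perfect : perfect_lee_code_d4 code.
Proof.
have tile_center c : tile c c by left; rewrite /S1 /= leexx.
split.
  move=> x y Cx Cy xy; rewrite leNgt; apply/negP => lt4.
  by apply: xy; apply: code_lee_le3; rewrite // -ltzD1.
exists [set T | exists2 c, code c & T = tile c].
split; [split; [|split]|split].
- move=> _ [c _ ->]; exists c, (c + e ord0), id; split; first exact: lee_addr_e.
  by split; [split => //; split => //; exists id | rewrite image_id].
- move=> _ _ [c Cc ->] [c' Cc' ->] neq.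
  by apply/seteqP; split => x // [h h']; apply: neq; rewrite (code_tile_inj Cc Cc' h h').
- by move=> x; have [c Cc h] := code_cover x; exists (tile c) => //; exists c.
- move=> _ [c Cc ->]; exists c; split; first by split.
  by move=> c' [Cc' h]; apply: code_tile_inj Cc Cc' h (tile_center c').
- move=> _ _ c c' [c0 C0 ->] [c1 C1 ->] neq Cc h Cc' h' cc'; subst c'.
  have c0E : c0 = c := code_tile_inj C0 Cc h (tile_center c).
  have c1E : c1 = c := code_tile_inj C1 Cc h' (tile_center c).
  by apply: neq; rewrite c0E c1E.
Qed.

End Code.

(* On the line [e_1 + Z e_0], which has weight 1, the code meets layer 0 but no
   negative layer, so no shift along [e_0] preserves it; layer [m + 1] records
   [g m]. *)
Definition tau_of (g : nat -> bool) (k : int) : bool :=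
  match k with Posz 0 => true | Posz m.+1 => g m | Negz _ => false end.

Definition line_pt n (t : int) : Zn n.+1 := t *: e ord0 + e (inord 1).

Lemma code_line_pt n tau t : (1 <= n)%N ->
  code tau (line_pt n t) <-> exists2 k, t + 1 = 4 * k & tau k.
Proof.
move=> n_ge1.
have sumE : csum (line_pt n t) = t + 1 by rewrite lformD lformZ !lform_e mulr1.
have wE : wsum (line_pt n t) = 1.
  by rewrite lformD lformZ !lform_e inordK // mulr0 add0r.
split=> [[k [q [tE w1]]]|[k tE tk]]; last by exists k, 0; rewrite sumE wE tk mul0r addr0.
exists k; first by rewrite -sumE.
move: w1; rewrite wE; case: (tau k) => // w1; exfalso.
have [q_le0|q_ge1] : q <= 0 \/ 1 <= q by lia.
- by have := ler_wpM2r (ler0n _ n.+1) q_le0; rewrite mul0r; lia.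
- by have := ler_wpM2r (ler0n _ n.+1) q_ge1; rewrite mul1r; lia.
Qed.

Lemma code_tau_of_line_pt n g (m : nat) : (1 <= n)%N ->
  code (tau_of g) (line_pt n (4 * m%:Z + 3)) <-> g m.
Proof.
move=> n_ge1; rewrite code_line_pt //; split=> [[k kE]|gm].
  by have -> : k = m.+1%:Z by lia.
by exists m.+1%:Z; first lia.
Qed.

Lemma code_tau_of_inj n : (1 <= n)%N -> injective (fun g => code (n := n) (tau_of g)).
Proof.
move=> n_ge1 g g' codeE; apply/funext => m.
by apply/idP/idP; rewrite -!(code_tau_of_line_pt _ _ n_ge1) codeE.
Qed.

Lemma periodic_iter n (S : set (Zn n)) (p : nat) (i : 'I_n) :
  (forall s, S s <-> S (s + p%:Z *: e i)) ->
  forall (m : nat) s, S s <-> S (s + (m * p)%N%:Z *: e i).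
Proof.
move=> per; elim=> [|m IHm] s; first by rewrite scale0r addr0.
by rewrite IHm per -addrA -scalerDl -PoszD mulSn addnC.
Qed.

Lemma code_tau_of_aperiodic n g : (1 <= n)%N -> ~ periodic (code (n := n) (tau_of g)).
Proof.
move=> n_ge1 [p [p_gt0 per]].
have layer0 : code (tau_of g) (line_pt n (-1)) by apply/code_line_pt => //; exists 0.
have := periodic_iter (fun s => per s ord0) 4 (line_pt n (-1 - (4 * p)%N%:Z)).
rewrite /line_pt addrAC -scalerDl subrK -!/(line_pt n _) => -[_ /(_ layer0)].
rewrite code_line_pt // => -[k kE].
suff -> : k = Negz p.-1 by [].
by rewrite NegzE; lia.
Qed.

Lemma card_le_inj T U (A : set T) (B : set U) (f : T -> U) :
  {in A &, injective f} -> (forall x, A x -> B (f x)) -> (A #<= B)%card.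
Proof.
move=> f_inj fAB; rewrite -(card_le_eql (inj_card_eq f_inj)).
by apply: subset_card_le => _ [x Ax <-]; exact: fAB.
Qed.

Lemma countType_sets_card_le (T : countType) (A : set (set T)) :
  (A #<= [set: nat -> bool])%card.
Proof.
apply/pcard_injP.
exists (fun S m => if unpickle m is Some x then `[< S x >] else false) => S S' _ _ SE.
apply/funext => x; apply/propext; have := congr1 (fun h => h (pickle x)) SE.
by rewrite /= pickleK => /(congr1 is_true); rewrite !asboolE => ->.
Qed.

Local Close Scope ring_scope.
Local Open Scope card_scope.

Theorem corollary2 (n : nat) : (2 <= n)%N ->
  [set L : set (Zn n) | ~ periodic L /\ perfect_lee_code_d4 L]
    #= [set: nat -> bool].
Proof.
case: n => [|n] // n_ge2; have n_ge1 : (1 <= n)%N by [].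
apply/card_eqPle; split; first exact: countType_sets_card_le.
apply: (@card_le_inj _ _ _ _ (fun g => code (tau_of g))).
  by move=> g g' _ _; apply: code_tau_of_inj.
by move=> g _; split; [exact: code_tau_of_aperiodic | exact: code_perfect].
Qed.
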